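(* The consecutive patterns $\underline{2010}$ and $\underline{2110}$ are reciprocal, and the consecutive patterns $\underline{2110}$ and $\underline{2120}$ are reciprocal. Here two consecutive patterns $p,q$ are reciprocal if for every $n\ge1$ and all $S,T\subseteq[n]$, $$|\{\epsilon\in I_n:\operatorname{Em}(p,\epsilon)=S,\ \operatorname{Em}(q,\epsilon)=T\}|=|\{\epsilon\in I_n:\operatorname{Em}(p,\epsilon)=T,\ \operatorname{Em}(q,\epsilon)=S\}|.$$
   Context: An inversion sequence of length $n$ is an integer sequence $\epsilon=\epsilon_1\cdots\epsilon_n$ with $0\le\epsilon_i<i$ for all $i$; $I_n$ denotes the set of them. The reduction of an integer word is obtained by replacing every occurrence of its $k$-th smallest distinct value by $k-1$. A consecutive pattern $p=\underline{p_1\cdots p_r}$ occurs in a sequence $\epsilon$ at position $i$ if the reduction of $\epsilon_i\epsilon_{i+1}\cdots\epsilon_{i+r-1}$ equals $p_1\cdots p_r$. $\operatorname{Em}(p,\epsilon)$ is the set of all positions at which $p$ occurs in $\epsilon$, and $[n]=\{1,\dots,n\}$. *)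

From mathcomp Require Import all_boot.
Set Implicit Arguments. Unset Strict Implicit. Unset Printing Implicit Defensive.

Definition reduction (w : seq nat) : seq nat :=
  [seq count (fun y => y < x) (undup w) | x <- w].

(* An inversion sequence of length n, stored 0-indexed as a tuple:
   the entry at 0-indexed position i is eps_{i+1}, and must satisfy
   eps_{i+1} < i+1. *)
Definition is_invseq n (e : n.-tuple 'I_n) : bool :=
  [forall i : 'I_n, nat_of_ord (tnth e i) <= i].

Definition word n (e : n.-tuple 'I_n) : seq nat := [seq nat_of_ord x | x <- e].

(* p occurs at (1-indexed) position i+1, where i : 'I_n is 0-indexed:
   the window eps_{i+1} ... eps_{i+r} fits and its reduction equals p. *)
Definition occurs_at (p : seq nat) n (e : n.-tuple 'I_n) (i : nat) : bool :=
  (i + size p <= n) && (reduction (take (size p) (drop i (word e))) == p).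

(* Em(p, eps), as a subset of [n] encoded 0-indexed as {set 'I_n}. *)
Definition Em (p : seq nat) n (e : n.-tuple 'I_n) : {set 'I_n} :=
  [set i : 'I_n | occurs_at p e i].

Definition count_pair (p q : seq nat) n (S T : {set 'I_n}) : nat :=
  #|[set e : n.-tuple 'I_n | is_invseq e && (Em p e == S) && (Em q e == T)]|.

Definition reciprocal (p q : seq nat) : Prop :=
  forall n : nat, 1 <= n -> forall S T : {set 'I_n},
    count_pair p q S T = count_pair p q T S.

(* By inclusion-exclusion over pairs of sets of positions, reciprocity of p and q
   follows once, for all S and T, the inversion sequences in which p occurs at
   least at the positions of S and q at least at those of T are no more numerous
   than those with the roles of S and T exchanged.  Such an injection rewrites
   every occurrence at a marked position of S :|: T into an occurrence of the
   other pattern by changing a single letter of the window: the second one for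
   2010/2110, the third one for 2110/2120.  Marked windows overlap in at most one
   letter, so the new values propagate along chains of overlapping windows; the
   resulting map is an involution and keeps entries below their positions. *)

From mathcomp Require Import all_boot zify.
Set Implicit Arguments. Unset Strict Implicit. Unset Printing Implicit Defensive.

Lemma count_undup_lt_mono (s : seq nat) x y : x \in s -> y \in s ->
  (count (fun z => z < x) (undup s) < count (fun z => z < y) (undup s)) = (x < y).
Proof.
move=> xs ys; case: (ltnP x y) => [lt_xy | le_yx]; last first.
  by apply/negbTE; rewrite -leqNgt; apply: sub_count => z /= /leq_trans; apply.
have -> : count (fun z => z < y) (undup s) =
          count (fun z => z < x) (undup s) + count (fun z => x <= z < y) (undup s).
  by elim: (undup s) => //= z l ->; lia.
rewrite -ltn_subLR ?subnn // -has_count; apply/hasP; exists x; first by rewrite mem_undup.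
by rewrite leqnn lt_xy.
Qed.

Lemma nth_reduction_lt (s : seq nat) i j : i < size s -> j < size s ->
  (nth 0 (reduction s) i < nth 0 (reduction s) j) = (nth 0 s i < nth 0 s j).
Proof. by move=> hi hj; rewrite !(nth_map 0) //; apply: count_undup_lt_mono; apply: mem_nth. Qed.

Ltac decide_nat_cmp := repeat (match goal with
  | |- context [?x == ?y] =>
      (have -> : (x == y) = false by lia) || (have -> : (x == y) = true by lia)
  | |- context [?x < ?y] =>
      (have -> : (x < y) = false by lia) || (have -> : (x < y) = true by lia)
  end; rewrite /=).

Lemma reduction2010 a b c d :
  (reduction [:: a; b; c; d] == [:: 2; 0; 1; 0]) = [&& c < a, b < c & d == b].
Proof.
apply/idP/idP => [/eqP red | /and3P [ca bc /eqP ->]].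
  have lt i j := @nth_reduction_lt [:: a; b; c; d] i j; rewrite red /= in lt.
  by move: (lt 2 0 isT isT) (lt 1 2 isT isT) (lt 3 1 isT isT) (lt 1 3 isT isT) => /=; lia.
by rewrite /reduction /= !inE; decide_nat_cmp.
Qed.

Lemma reduction2110 a b c d :
  (reduction [:: a; b; c; d] == [:: 2; 1; 1; 0]) = [&& b < a, c == b & d < b].
Proof.
apply/idP/idP => [/eqP red | /and3P [ba /eqP -> db]].
  have lt i j := @nth_reduction_lt [:: a; b; c; d] i j; rewrite red /= in lt.
  by move: (lt 1 0 isT isT) (lt 3 1 isT isT) (lt 2 1 isT isT) (lt 1 2 isT isT) => /=; lia.
by rewrite /reduction /= !inE; decide_nat_cmp.
Qed.

Lemma reduction2120 a b c d :
  (reduction [:: a; b; c; d] == [:: 2; 1; 2; 0]) = [&& b < a, c == a & d < b].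
Proof.
apply/idP/idP => [/eqP red | /and3P [ba /eqP -> db]].
  have lt i j := @nth_reduction_lt [:: a; b; c; d] i j; rewrite red /= in lt.
  by move: (lt 1 0 isT isT) (lt 3 1 isT isT) (lt 2 0 isT isT) (lt 0 2 isT isT) => /=; lia.
by rewrite /reduction /= !inE; decide_nat_cmp.
Qed.

Definition entry n (e : n.-tuple 'I_n) (j : nat) : nat := nth 0 (word e) j.

Definition occ (n : nat) (p : seq nat) (f : nat -> nat) (i : nat) : bool :=
  (i + size p <= n) && (reduction [seq f k | k <- iota i (size p)] == p).

Definition admissible (p q : seq nat) n (U : pred nat) (f : nat -> nat) :=
  forall i, U i -> occ n p f i || occ n q f i.

Lemma occurs_atE p n (e : n.-tuple 'I_n) i : occurs_at p e i = occ n p (entry e) i.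
Proof.
rewrite /occurs_at /occ; case: leqP => //= le_n.
by rewrite map_nth_iota // size_map size_tuple; lia.
Qed.

Lemma mem_Em p n (e : n.-tuple 'I_n) (i : 'I_n) : (i \in Em p e) = occ n p (entry e) i.
Proof. by rewrite inE occurs_atE. Qed.

Lemma entry_tnth n (e : n.-tuple 'I_n) (i : 'I_n) : entry e i = tnth e i.
Proof. by rewrite /entry /word (nth_map i) ?size_tuple // -tnth_nth. Qed.

Lemma entry_out n (e : n.-tuple 'I_n) j : n <= j -> entry e j = 0.
Proof. by move=> le_nj; rewrite /entry nth_default // size_map size_tuple. Qed.

Lemma invseq_entry_le n (e : n.-tuple 'I_n) : is_invseq e -> forall j, entry e j <= j.
Proof.
move=> /forallP inv j; case: (ltnP j n) => [lt_jn | le_nj]; last by rewrite entry_out.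
by rewrite (entry_tnth e (Ordinal lt_jn)); apply: inv.
Qed.

Lemma eq_occ n p f g : f =1 g -> occ n p f =1 occ n p g.
Proof. by move=> fg i; rewrite /occ (eq_map fg). Qed.

Lemma eq_admissible p q n U f g : f =1 g -> admissible p q n U f -> admissible p q n U g.
Proof. by move=> fg adm i /adm; rewrite !(eq_occ _ _ fg). Qed.

Lemma occ2010 n f i : occ n [:: 2; 0; 1; 0] f i =
  (i + 4 <= n) && [&& f i.+2 < f i, f i.+1 < f i.+2 & f i.+3 == f i.+1].
Proof. by rewrite /occ /= reduction2010. Qed.

Lemma occ2110 n f i : occ n [:: 2; 1; 1; 0] f i =
  (i + 4 <= n) && [&& f i.+1 < f i, f i.+2 == f i.+1 & f i.+3 < f i.+1].
Proof. by rewrite /occ /= reduction2110. Qed.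

Lemma occ2120 n f i : occ n [:: 2; 1; 2; 0] f i =
  (i + 4 <= n) && [&& f i.+1 < f i, f i.+2 == f i & f i.+3 < f i.+1].
Proof. by rewrite /occ /= reduction2120. Qed.

Lemma card_setC_lt_superset (I : finType) (S T A B : {set I}) :
  S \subset A -> T \subset B -> (A, B) != (S, T) -> #|~: A| + #|~: B| < #|~: S| + #|~: T|.
Proof.
move=> sSA sTB neq.
have cardC (X Y : {set I}) : X \subset Y -> #|~: Y| <= #|~: X| ?= iff (~: Y == ~: X).
  by rewrite -setCS; apply: subset_leqif_cards.
rewrite (ltn_leqif (leqif_add (cardC _ _ sSA) (cardC _ _ sTB))).
by rewrite !(inj_eq (@setC_inj _)) -xpair_eqE.
Qed.

Section SupersetCounting.
Variables (X I : finType) (D : pred X) (Ep Eq : X -> {set I}).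

Definition fiber_card (S T : {set I}) := #|[set x | D x && (Ep x == S) && (Eq x == T)]|.

Definition superset_card (S T : {set I}) :=
  #|[set x | D x && (S \subset Ep x) && (T \subset Eq x)]|.

Lemma superset_card_sum S T : superset_card S T =
  \sum_(AB : {set I} * {set I} | (S \subset AB.1) && (T \subset AB.2)) fiber_card AB.1 AB.2.
Proof.
rewrite /superset_card -sum1_card (partition_big (fun x => (Ep x, Eq x))
  (fun AB : {set I} * {set I} => (S \subset AB.1) && (T \subset AB.2))) => [|x]; last first.
  by rewrite inE => /andP [/andP [_ ->] ->].
apply: eq_bigr => -[A B] /= /andP [sSA sTB]; rewrite /fiber_card -sum1_card.
apply: eq_bigl => x; rewrite !inE xpair_eqE.
by case: (Ep x =P A) => [->|]; case: (Eq x =P B) => [->|]; rewrite ?sSA ?sTB ?andbF ?andbT.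
Qed.

(* Induction on #|~: S| + #|~: T|: in the superset sums for (S, T) and (T, S)
   all terms but fiber_card S T and fiber_card T S match up by induction. *)
Lemma fiber_card_sym : (forall S T, superset_card S T <= superset_card T S) ->
  forall S T, fiber_card S T = fiber_card T S.
Proof.
move=> le_super S T; have [k] := ubnP (#|~: S| + #|~: T|).
elim: k => // k IH in S T *; rewrite ltnS => le_k.
have : superset_card S T = superset_card T S by apply/eqP; rewrite eqn_leq !le_super.
rewrite !superset_card_sum (bigD1 (S, T)) ?subxx //= [in RHS](bigD1 (T, S)) ?subxx //=.
pose swap (AB : {set I} * {set I}) := (AB.2, AB.1); have swapK : involutive swap by case.
rewrite [in RHS](reindex_inj (inv_inj swapK)) /=.
set s1 := bigop _ _ _; set s2 := bigop _ _ _; suff -> : s1 = s2 by move/addIn.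
rewrite /s1 /s2; apply: eq_big => -[A B] /=.
  by rewrite -(inj_eq (inv_inj swapK)); case: (S \subset A); case: (T \subset B).
case/andP=> /andP [sSA sTB] neq; apply: IH.
exact: leq_trans (card_setC_lt_superset sSA sTB neq) le_k.
Qed.

End SupersetCounting.

Section ReciprocalOfFlip.
Variables (p q : seq nat) (flip : nat -> pred nat -> (nat -> nat) -> nat -> nat).

Hypothesis flip_pq : forall n U f,
  admissible p q n U f -> forall i, U i -> occ n p f i -> occ n q (flip n U f) i.
Hypothesis flip_qp : forall n U f,
  admissible p q n U f -> forall i, U i -> occ n q f i -> occ n p (flip n U f) i.
Hypothesis flip_out : forall n U f,
  admissible p q n U f -> forall j, n <= j -> flip n U f j = f j.
Hypothesis flip_le : forall n U f,
  admissible p q n U f -> (forall j, f j <= j) -> forall j, flip n U f j <= j.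
Hypothesis flipK : forall n U f,
  admissible p q n U f -> forall g, g =1 flip n U f -> flip n U g =1 f.

Section FlipTuple.
Variables (n : nat) (A B : {set 'I_n}).

Let U : pred nat := fun i => [exists x in A :|: B, val x == i].

Let D (S T : {set 'I_n}) :=
  [set e : n.-tuple 'I_n | is_invseq e && (S \subset Em p e) && (T \subset Em q e)].

Let phi (e : n.-tuple 'I_n) : n.-tuple 'I_n :=
  [tuple insubd j (flip n U (entry e) j) | j < n].

Let U_val (x : 'I_n) : U x = (x \in A :|: B).
Proof.
apply/existsP/idP => [[y /andP [yAB /eqP /val_inj <-]] // | xAB].
by exists x; rewrite xAB eqxx.
Qed.

Let admissible_D e : e \in D A B -> admissible p q n U (entry e).
Proof.
rewrite inE => /andP [/andP [_ /subsetP sAE] /subsetP sBE] i /existsP [x /andP [xAB /eqP <-]].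
by case/setUP: xAB => [/sAE | /sBE]; rewrite mem_Em => ->; rewrite ?orbT.
Qed.

Let entry_le e : e \in D A B -> forall j, entry e j <= j.
Proof. by rewrite inE => /andP [/andP [inv _] _]; apply: invseq_entry_le. Qed.

Let entry_phi e : e \in D A B -> entry (phi e) =1 flip n U (entry e).
Proof.
move=> De j; case: (ltnP j n) => [lt_jn | le_nj]; last first.
  by rewrite entry_out // flip_out ?entry_out //; apply: admissible_D.
rewrite (entry_tnth _ (Ordinal lt_jn)) tnth_mktuple val_insubd /=.
by rewrite (leq_ltn_trans (flip_le (admissible_D De) (entry_le De) j)).
Qed.

Let phiK : {in D A B, involutive phi}.
Proof.
move=> e De; apply: eq_from_tnth => j; apply: val_inj.
rewrite tnth_mktuple val_insubd (flipK (admissible_D De) (entry_phi De)).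
by rewrite entry_tnth ltn_ord.
Qed.

Let phi_D e : e \in D A B -> phi e \in D B A.
Proof.
move=> De; have := De; rewrite !inE -!andbA => /and3P [_ /subsetP sAE /subsetP sBE].
apply/and3P; split.
- apply/forallP => j; rewrite -entry_tnth entry_phi //.
  exact: flip_le (admissible_D De) (entry_le De) j.
- apply/subsetP => x xB; rewrite mem_Em (eq_occ _ _ (entry_phi De)).
  by apply: flip_qp; [apply: admissible_D | rewrite U_val inE xB orbT | rewrite -mem_Em sBE].
- apply/subsetP => x xA; rewrite mem_Em (eq_occ _ _ (entry_phi De)).
  by apply: flip_pq; [apply: admissible_D | rewrite U_val inE xA | rewrite -mem_Em sAE].
Qed.

Lemma superset_card_le_flip : #|D A B| <= #|D B A|.
Proof.
rewrite -(card_in_imset (can_in_inj phiK)).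
by apply/subset_leq_card/subsetP => _ /imsetP [e De ->]; apply: phi_D.
Qed.

End FlipTuple.

Lemma reciprocal_of_flip : reciprocal p q.
Proof.
move=> n _ S T; apply: (fiber_card_sym (D := @is_invseq n)) => {}S {}T.
exact: superset_card_le_flip.
Qed.

End ReciprocalOfFlip.

(* In a marked window (a, b, c, d) = (f i, .., f i.+3) only b = f i.+1 changes:
   a b c b (2010) becomes a c c b and a b b d (2110) becomes a d' b d', where d'
   is the new value of d, which changes when the window at i.+2 is marked.  The
   fuel k only has to exceed the length of such chains. *)
Fixpoint flip2010 (k : nat) (U : pred nat) (f : nat -> nat) (j : nat) : nat :=
  if k is k.+1 then
    if j is i.+1 then
      if U i then (if f j == f j.+1 then flip2010 k U f j.+2 else f j.+1) else f j
    else f j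
  else f j.

Section Flip2010.
Variables (n : nat) (U : pred nat) (f : nat -> nat).
Hypothesis admU : admissible [:: 2; 0; 1; 0] [:: 2; 1; 1; 0] n U f.
Local Notation g := (flip2010 n U f).

Lemma window2010 i : U i -> [/\ i + 4 <= n, f i.+3 < f i.+2, f i.+2 < f i &
  (f i.+1 == f i.+2) || (f i.+1 == f i.+3)].
Proof. by move/admU; rewrite occ2010 occ2110 => /orP [] /andP [? /and3P [? ? ?]]; split; lia. Qed.

Lemma nonadjacent2010 i : U i -> U i.+1 = false.
Proof.
move=> Ui; apply/negbTE/negP => /window2010 [_ ? ? ?].
by have [_ ? ? ?] := window2010 Ui; lia.
Qed.

Lemma flip2010_stable k k' j : n <= j + k -> n <= j + k' ->
  flip2010 k U f j = flip2010 k' U f j.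
Proof.
elim: k k' j => [|k IH] [|k'] [|i] //= le_k le_k'; case Ui: (U i) => //;
  try by have [] := window2010 Ui; lia.
by rewrite (IH k'); lia.
Qed.

Lemma flip2010E j : g j =
  if j is i.+1 then (if U i then (if f j == f j.+1 then g j.+2 else f j.+1) else f j) else f j.
Proof.
case: j => [|i]; first by case: (n).
case Ui: (U i); last by case: (n) => //= m; rewrite Ui.
have [le_n _ _ _] := window2010 Ui; case En: (n) => [|m]; first lia.
by rewrite [LHS]/= Ui (flip2010_stable (k := m) (k' := m.+1)) //; lia.
Qed.

Lemma flip2010_out j : n <= j -> g j = f j.
Proof.
rewrite flip2010E; case: j => [|i] // le_n; case Ui: (U i) => //.
by have [] := window2010 Ui; lia.
Qed.

Lemma flip2010_a i : U i -> g i = f i.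
Proof.
rewrite flip2010E; case: i => [|i] // Ui; case Ui': (U i) => //.
by rewrite (nonadjacent2010 Ui') in Ui.
Qed.

Lemma flip2010_b i : U i -> g i.+1 = if f i.+1 == f i.+2 then g i.+3 else f i.+2.
Proof. by move=> Ui; rewrite flip2010E Ui. Qed.

Lemma flip2010_c i : U i -> g i.+2 = f i.+2.
Proof. by move=> Ui; rewrite flip2010E (nonadjacent2010 Ui). Qed.

Lemma flip2010_b_le i : U i -> g i.+1 <= f i.+2.
Proof.
have [k] := ubnP (n - i); elim: k => // k IH in i *; rewrite ltnS => le_k Ui.
have [le_n ? _ _] := window2010 Ui; rewrite (flip2010_b Ui); case: eqP => // _.
case Ui2: (U i.+2); last by rewrite flip2010E Ui2; lia.
have IH2 : g i.+3 <= f i.+4 by apply: IH Ui2; lia.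
by have [_ _ ? _] := window2010 Ui2; lia.
Qed.

Lemma flip2010_d_lt i : U i -> g i.+3 < f i.+2.
Proof.
move=> Ui; have [_ ? _ _] := window2010 Ui.
case Ui2: (U i.+2); last by rewrite flip2010E Ui2.
by have [_ _ ? _] := window2010 Ui2; have := flip2010_b_le Ui2; lia.
Qed.

Lemma flip2010_pq : forall i, U i -> occ n [:: 2; 0; 1; 0] f i -> occ n [:: 2; 1; 1; 0] g i.
Proof.
move=> i Ui; rewrite occ2010 occ2110 => /andP [-> /and3P [c_a b_c _]].
rewrite (flip2010_b Ui) (ltn_eqF b_c) /= (flip2010_a Ui) (flip2010_c Ui).
by rewrite c_a eqxx (flip2010_d_lt Ui).
Qed.

Lemma flip2010_qp : forall i, U i -> occ n [:: 2; 1; 1; 0] f i -> occ n [:: 2; 0; 1; 0] g i.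
Proof.
move=> i Ui; rewrite occ2110 occ2010 => /andP [-> /and3P [b_a /eqP c_b _]].
rewrite (flip2010_b Ui) (flip2010_a Ui) (flip2010_c Ui) -c_b eqxx /=.
by rewrite (flip2010_d_lt Ui) eqxx c_b b_a.
Qed.

Lemma flip2010_le : (forall j, f j <= j) -> forall j, g j <= j.
Proof.
move=> f_le [|i]; first by rewrite flip2010E.
case Ui: (U i); last by rewrite flip2010E Ui.
have [_ _ ? _] := window2010 Ui; have := flip2010_b_le Ui; have := f_le i; lia.
Qed.

Lemma admissible_flip2010 : admissible [:: 2; 0; 1; 0] [:: 2; 1; 1; 0] n U g.
Proof.
move=> i Ui; case/orP: (admU Ui) => [/(flip2010_pq Ui) -> | /(flip2010_qp Ui) ->] //.
by rewrite orbT.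
Qed.

End Flip2010.

Lemma flip2010K n U f : admissible [:: 2; 0; 1; 0] [:: 2; 1; 1; 0] n U f ->
  forall h, h =1 flip2010 n U f -> flip2010 n U h =1 f.
Proof.
move=> admf h E; have admh := eq_admissible (fun j => esym (E j)) (admissible_flip2010 admf).
move=> j; have [k] := ubnP (n - j); elim: k => // k IH in j *; rewrite ltnS => le_k.
case: j => [|i] in le_k *; first by rewrite (flip2010E admh) E (flip2010E admf).
case Ui: (U i); last by rewrite (flip2010E admh) E (flip2010E admf) Ui.
have [le_n _ _ _] := window2010 admf Ui.
rewrite (flip2010_b admh Ui) !E (flip2010_c admf Ui) (flip2010_b admf Ui).
case/orP: (admf _ Ui); rewrite ?occ2010 ?occ2110 => /andP [_ /and3P [_ h1 h2]].
- by rewrite (ltn_eqF h1) eqxx IH ?(eqP h2) //; lia.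
- by have := flip2010_d_lt admf Ui; rewrite (eqP h1) eqxx /= => /ltn_eqF ->.
Qed.

(* In a marked window (a, b, c, d) = (f i, .., f i.+3) only c = f i.+2 changes:
   a b b d (2110) becomes a b a' d and a b a d (2120) becomes a b b d, where a'
   is the new value of a, which changes when the window at i - 2 is marked. *)
Fixpoint flip2120 (U : pred nat) (f : nat -> nat) (j : nat) : nat :=
  if j is k.+2 then
    if U k then (if f j == f k.+1 then flip2120 U f k else f k.+1) else f j
  else f j.

Lemma flip2120_c (U : pred nat) (f : nat -> nat) i : U i ->
  flip2120 U f i.+2 = if f i.+2 == f i.+1 then flip2120 U f i else f i.+1.
Proof. by move=> Ui /=; rewrite Ui. Qed.

Section Flip2120.
Variables (n : nat) (U : pred nat) (f : nat -> nat).
Hypothesis admU : admissible [:: 2; 1; 1; 0] [:: 2; 1; 2; 0] n U f.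
Local Notation g := (flip2120 U f).

Lemma window2120 i : U i -> [/\ i + 4 <= n, f i.+3 < f i.+1, f i.+1 < f i &
  (f i.+2 == f i) || (f i.+2 == f i.+1)].
Proof. by move/admU; rewrite occ2110 occ2120 => /orP [] /andP [? /and3P [? ? ?]]; split; lia. Qed.

Lemma nonadjacent2120 i : U i -> U i.+1 = false.
Proof.
move=> Ui; apply/negbTE/negP => /window2120 [_ ? ? ?].
by have [_ ? ? ?] := window2120 Ui; lia.
Qed.

Lemma flip2120_out j : n <= j -> g j = f j.
Proof.
case: j => [|[|k]] //= le_n; case Uk: (U k) => //.
by have [] := window2120 Uk; lia.
Qed.

Lemma flip2120_b i : U i -> g i.+1 = f i.+1.
Proof.
case: i => [|i] //= Ui; case Ui': (U i) => //.
by rewrite (nonadjacent2120 Ui') in Ui.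
Qed.

Lemma flip2120_d i : U i -> g i.+3 = f i.+3.
Proof. by move=> Ui /=; rewrite (nonadjacent2120 Ui). Qed.

Lemma flip2120_a_gt i : U i -> f i.+1 < g i.
Proof.
elim/ltn_ind: i => -[|[|k]] IH Ui; have [_ ? ? _] := window2120 Ui => //.
case Uk: (U k); last by rewrite /= Uk.
have [_ ? _ _] := window2120 Uk; rewrite flip2120_c //.
by case: eqP => // c_b; have := IH k (ltnW (ltnSn _)) Uk; lia.
Qed.

Lemma flip2120_pq : forall i, U i -> occ n [:: 2; 1; 1; 0] f i -> occ n [:: 2; 1; 2; 0] g i.
Proof.
move=> i Ui; rewrite occ2110 occ2120 => /andP [-> /and3P [_ c_b d_b]].
rewrite (flip2120_b Ui) (flip2120_d Ui) (flip2120_c _ Ui) c_b (flip2120_a_gt Ui).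
by rewrite d_b eqxx.
Qed.

Lemma flip2120_qp : forall i, U i -> occ n [:: 2; 1; 2; 0] f i -> occ n [:: 2; 1; 1; 0] g i.
Proof.
move=> i Ui; rewrite occ2120 occ2110 => /andP [-> /and3P [b_a /eqP c_a d_b]].
rewrite (flip2120_b Ui) (flip2120_d Ui) (flip2120_c _ Ui) c_a (gtn_eqF b_a).
by rewrite (flip2120_a_gt Ui) d_b eqxx.
Qed.

Lemma flip2120_le : (forall j, f j <= j) -> forall j, g j <= j.
Proof.
move=> f_le; elim/ltn_ind => -[|[|k]] IH //=; case: (U k) => //.
by case: eqP => _; [have := IH k (ltnW (ltnSn _)) | have := f_le k.+1]; lia.
Qed.

End Flip2120.

Lemma flip2120K n U f : admissible [:: 2; 1; 1; 0] [:: 2; 1; 2; 0] n U f ->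
  forall h, h =1 flip2120 U f -> flip2120 U h =1 f.
Proof.
move=> admf h E; elim/ltn_ind => -[|[|k]] IH; rewrite /= !E //.
case Uk: (U k); last by rewrite /= Uk.
rewrite (flip2120_b admf Uk) (flip2120_c _ Uk).
case/orP: (admf _ Uk); rewrite ?occ2110 ?occ2120 => /andP [_ /and3P [b_a /eqP c _]].
- by rewrite c eqxx (gtn_eqF (flip2120_a_gt admf Uk)).
- by rewrite c (gtn_eqF b_a) eqxx IH.
Qed.

Theorem mainTheorem2 :
  reciprocal [:: 2; 0; 1; 0] [:: 2; 1; 1; 0] /\
  reciprocal [:: 2; 1; 1; 0] [:: 2; 1; 2; 0].
Proof.
split.
- apply: (@reciprocal_of_flip _ _ flip2010).
  + exact: flip2010_pq.
  + exact: flip2010_qp.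
  + exact: flip2010_out.
  + exact: flip2010_le.
  + exact: flip2010K.
- apply: (@reciprocal_of_flip _ _ (fun _ => flip2120)).
  + exact: flip2120_pq.
  + exact: flip2120_qp.
  + exact: flip2120_out.
  + by move=> n U f _; apply: flip2120_le.
  + exact: flip2120K.
Qed.
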